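(* Let $N_2$ be the set of non-negative integers whose base-3 representation does not use the digit $2$. For each integer $n\ge0$ let $\ell_n^+,\ell_n^-$ be the unique non-negative integers with $\ell_n^+,\ell_n^-,\ell_n^++\ell_n^-\in N_2$ and $n=\ell_n^+-\ell_n^-$, and set $\ell_n=\ell_n^++\ell_n^-$. Let $\alpha,\beta$ be the maps on finite and infinite words over $X_3=\{0,1,2\}$ defined recursively by \[\alpha(0w)=0\alpha(w),\ \alpha(1w)=1\alpha(w),\ \alpha(2w)=1\beta(w),\quad \beta(0w)=1\alpha(w),\ \beta(1w)=1\beta(w),\ \beta(2w)=0\beta(w).\] For $n\ge0$ let $(n)_3=n_0n_1n_2\dots$ be the infinite word of base-3 digits of $n$, least significant first, ending in $0^\infty$. Then for every $n\ge0$ the infinite word $\alpha((n)_3)$ is the infinite word of base-3 digits of $\ell_n$, least significant first; i.e. the sequence $(\ell_n)_{n\ge0}$ is the ternary transducer integer sequence generated by the transducer with states $\alpha,\beta$ started at $\alpha$.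
   Context: The recursion for $\alpha,\beta$ determines their action on infinite words letter by letter. *)

From mathcomp Require Import all_boot.
Set Implicit Arguments. Unset Strict Implicit. Unset Printing Implicit Defensive.

(* k-th base-3 digit of n (least significant first): (n)_3 = digit3 n 0, digit3 n 1, ... *)
Definition digit3 (n k : nat) : nat := (n %/ 3 ^ k) %% 3.

Definition inN2 (n : nat) : Prop := forall k, digit3 n k <> 2.

Definition word := nat -> nat.

Inductive tstate := St_alpha | St_beta.

(* One transition step: (state, input letter) |-> (output letter, next state), from
   alpha(0w)=0alpha(w), alpha(1w)=1alpha(w), alpha(2w)=1beta(w),
   beta(0w)=1alpha(w),  beta(1w)=1beta(w),  beta(2w)=0beta(w). *)
Definition tstep (s : tstate) (x : nat) : nat * tstate :=
  match s, x with
  | St_alpha, 0 => (0, St_alpha)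
  | St_alpha, 1 => (1, St_alpha)
  | St_alpha, _ => (1, St_beta)
  | St_beta, 0 => (1, St_alpha)
  | St_beta, 1 => (1, St_beta)
  | St_beta, _ => (0, St_beta)
  end.

Fixpoint tstate_at (s : tstate) (w : word) (k : nat) : tstate :=
  match k with
  | 0 => s
  | k'.+1 => (tstep (tstate_at s w k') (w k')).2
  end.

Definition tact (s : tstate) (w : word) : word :=
  fun k => (tstep (tstate_at s w k) (w k)).1.

Definition alpha_map (w : word) : word := tact St_alpha w.

From mathcomp Require Import all_boot zify.
Set Implicit Arguments. Unset Strict Implicit. Unset Printing Implicit Defensive.

(* Write the state [alpha] as carry 0 and [beta] as carry 1.  If [lp - lm = n + c]
   with [lp], [lm], [lp + lm] in N_2, the last ternary digits [u], [v] of [lp], [lm]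
   satisfy [u + v < 2] and [u - v = n_0 + c (mod 3)], which determines them and the
   carry [c' = (2 <= n_0 + c)] of the remaining digits: [n / 3 + c' + lm / 3 = lp / 3].
   Reading [n_0] in state [c], the transducer outputs exactly [u + v] (the last digit
   of [lp + lm], as there is no carry in this addition) and moves to state [c'].
   Induction along the digits gives the output word; running the same digit
   recurrence backwards builds [lp] and [lm]. *)

Lemma digit3_0 n : digit3 n 0 = n %% 3.
Proof. by rewrite /digit3 expn0 divn1. Qed.

Lemma digit3S n k : digit3 n k.+1 = digit3 (n %/ 3) k.
Proof. by rewrite /digit3 expnS divnMA. Qed.

Lemma inN2_0 : inN2 0.
Proof. by move=> k; rewrite /digit3 div0n mod0n. Qed.

Lemma inN2_mod x : inN2 x -> x %% 3 < 2.
Proof. by move=> x2; have := x2 0; rewrite digit3_0; lia. Qed.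

Lemma inN2_div x : inN2 x -> inN2 (x %/ 3).
Proof. by move=> x2 k; rewrite -digit3S. Qed.

Lemma inN2_muln3D p u : inN2 p -> u < 2 -> inN2 (p * 3 + u).
Proof.
move=> p2 u_lt2 [|k]; first by rewrite digit3_0; lia.
by rewrite digit3S (_ : (p * 3 + u) %/ 3 = p); [apply: p2 | lia].
Qed.

Lemma inN2_divD x y : inN2 x -> inN2 y -> inN2 (x + y) ->
  (x + y) %/ 3 = x %/ 3 + y %/ 3.
Proof. by move=> /inN2_mod ? /inN2_mod ? /inN2_mod ?; lia. Qed.

Lemma tstate_atS s (w w' : word) k : (forall i, w' i = w i.+1) ->
  tstate_at s w k.+1 = tstate_at (tstep s (w 0)).2 w' k.
Proof. by move=> w'E; elim: k => [|k /= ->] //; rewrite w'E. Qed.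

Lemma tactS s (w w' : word) k : (forall i, w' i = w i.+1) ->
  tact s w k.+1 = tact (tstep s (w 0)).2 w' k.
Proof. by move=> w'E; rewrite /tact (tstate_atS s k w'E) w'E. Qed.

Definition carry (s : tstate) : nat := if s is St_beta then 1 else 0.

Definition balanced_pair (m lp lm : nat) : Prop :=
  [/\ inN2 lp, inN2 lm, inN2 (lp + lm) & m + lm = lp].

Lemma balanced_pair_tstep s n lp lm : balanced_pair (n + carry s) lp lm ->
  (tstep s (n %% 3)).1 = (lp + lm) %% 3 /\
  balanced_pair (n %/ 3 + carry (tstep s (n %% 3)).2) (lp %/ 3) (lm %/ 3).
Proof.
move=> [lp2 lm2 l2 nE]; have lE := inN2_divD lp2 lm2 l2.
have := inN2_mod lp2; have := inN2_mod lm2; have := inN2_mod l2 => ? ? ?.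
have [n0|[n0|n0]] : n %% 3 = 0 \/ n %% 3 = 1 \/ n %% 3 = 2 by lia.
all: rewrite n0; split; [|split; rewrite -?lE; try exact: inN2_div].
all: by case: s nE => /= nE; lia.
Qed.

Lemma tact_balanced s n lp lm k : balanced_pair (n + carry s) lp lm ->
  tact s (digit3 n) k = digit3 (lp + lm) k.
Proof.
elim: k s n lp lm => [|k IH] s n lp lm lpm; have [out next] := balanced_pair_tstep lpm.
  by rewrite /tact /= !digit3_0.
have [lp2 lm2 l2 _] := lpm.
rewrite (tactS _ k (fun i => esym (digit3S n i))) digit3_0 digit3S.
by rewrite (IH _ _ _ _ next) inN2_divD.
Qed.

Lemma balanced_pair_lift n c p q : c < 2 ->
  balanced_pair (n %/ 3 + (2 <= n %% 3 + c)) p q ->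
  exists lp lm, balanced_pair (n + c) lp lm.
Proof.
move=> c_lt2 [p2 q2 pq2 nE].
have [u [v [u_lt2 v_lt2 uv_lt2 uvE]]] : exists u v,
    [/\ u < 2, v < 2, u + v < 2 & n %% 3 + c + v = u + 3 * (2 <= n %% 3 + c)].
  have [t0|[t1|[t2|t3]]] : n %% 3 + c = 0 \/ n %% 3 + c = 1 \/
      n %% 3 + c = 2 \/ n %% 3 + c = 3 by lia.
  - by exists 0, 0; rewrite t0.
  - by exists 1, 0; rewrite t1.
  - by exists 0, 1; rewrite t2.
  - by exists 0, 0; rewrite t3.
exists (p * 3 + u), (q * 3 + v); split; try exact: inN2_muln3D; last by lia.
by rewrite (_ : _ + _ = (p + q) * 3 + (u + v)); [apply: inN2_muln3D | lia].
Qed.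

Lemma balanced_pair_exists n c : c < 2 -> exists lp lm, balanced_pair (n + c) lp lm.
Proof.
elim/ltn_ind: n c => n IH c c_lt2.
have [->|n_gt0] := posnP n.
  have c2 : inN2 c := inN2_muln3D inN2_0 c_lt2.
  by exists c, 0; split; rewrite ?addn0 //; apply: inN2_0.
have [p [q pq]] :=
  IH (n %/ 3) (ltn_Pdiv (isT : 1 < 3) n_gt0) (2 <= n %% 3 + c) (leq_b1 _).
exact: balanced_pair_lift pq.
Qed.

Theorem mainTheorem6 (n : nat) :
  (exists lp lm : nat, inN2 lp /\ inN2 lm /\ inN2 (lp + lm) /\ n + lm = lp) /\
  (forall lp lm : nat, inN2 lp -> inN2 lm -> inN2 (lp + lm) -> n + lm = lp ->
     forall k : nat, alpha_map (digit3 n) k = digit3 (lp + lm) k).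
Proof.
split.
  have [lp [lm [lp2 lm2 l2 nE]]] := balanced_pair_exists n (isT : 0 < 2).
  by exists lp, lm; rewrite -[n]addn0.
move=> lp lm lp2 lm2 l2 nE k.
by apply: tact_balanced; split; rewrite ?addn0.
Qed.
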